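(* Let $\Lambda$ denote the von Mangoldt function and let $\varepsilon>0$ be a small number. Then, as $x\to\infty$, \[ \sum_{n\leq x}\Lambda([x/n])\Lambda([x/n]+2) = r_2 x + O\left(x^{(2+\varepsilon)/3}\log^2 x\right), \] where the density constant is \[ r_2=\sum_{n\geq 1}\frac{\Lambda(n)\Lambda(n+2)}{n(n+1)}\geq 0.368142813. \]
   Context: $[t]$ denotes the largest integer not exceeding $t$. The von Mangoldt function is $\Lambda(m)=\log p$ if $m=p^k$ for a prime $p$ and an integer $k\geq 1$, and $\Lambda(m)=0$ otherwise. The sum is over positive integers $n\le x$. *)

From HB Require Import structures.
From mathcomp Require Import all_boot all_order all_algebra.
From mathcomp Require Import all_classical all_reals all_analysis.
Set Implicit Arguments. Unset Strict Implicit. Unset Printing Implicit Defensive.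
Import Order.TTheory GRing.Theory Num.Theory.
Import numFieldNormedType.Exports.
Local Open Scope ring_scope.

(* von Mangoldt function: Lambda m = log p if m = p^k (p prime, k >= 1),
   i.e. m has exactly one prime divisor p; Lambda m = 0 otherwise. *)
Definition vonMangoldt {R : realType} (m : nat) : R :=
  if primes m is [:: p] then ln (p%:R) else 0.

(* [t] = floor t; for t >= 0 this is Num.truncn t. Here t = x/n >= 0. *)
Definition Ssum {R : realType} (x : R) : R :=
  \sum_(1 <= n < (Num.truncn x).+1)
     (vonMangoldt (Num.truncn (x / n%:R)) * vonMangoldt (Num.truncn (x / n%:R)).+2).

Definition r2_term {R : realType} (n : nat) : R :=
  vonMangoldt n * vonMangoldt n.+2 / (n%:R * n.+1%:R).

Definition r2_partial {R : realType} (N : nat) : R := \sum_(1 <= n < N) r2_term n.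

Definition r2 {R : realType} : R := limn (@r2_partial R).

(* Write N = [x]. Since [x/n] = [N/n], grouping the n with [N/n] = m turns the sum
   into sum_(m <= N) f(m) ([N/m] - [N/(m+1)]), where f(m) = Lambda(m) Lambda(m+2) is at
   most log^2 (m+2). Split at Y = [sqrt x]. For m <= Y the weight [N/m] - [N/(m+1)] is
   N/(m(m+1)) up to an error of at most 1, which yields N times a partial sum of r2 up to
   O(Y log^2 x). For m > Y the weights telescope to [N/(Y+1)] <= sqrt x. Finally the tail
   of r2 beyond Y is at most 2 log^2(Y+3)/(Y+1), because as soon as log(m+2) >= 5 each term
   of r2 is dominated by the decrement of 2 log^2(m+2)/m. This gives the error
   O(sqrt x log^2 x), better than claimed. The numerical lower bound for r2 comes from its
   first eleven terms and from log p >= c whenever p (1 - c/n)^n >= 1, itself a consequence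
   of e^d (1 - d) <= 1. *)

From HB Require Import structures.
From mathcomp Require Import all_boot all_order all_algebra.
From mathcomp Require Import all_classical all_reals all_analysis.
From mathcomp Require Import ring lra zify.
Import Order.TTheory GRing.Theory Num.Theory.
Import numFieldNormedType.Exports.

Lemma divn_eq_itv N m n : 0 < n -> 0 < m ->
  (N %/ n == m) = (N %/ m.+1 < n <= N %/ m).
Proof.
move=> n0 m0; rewrite eqn_leq -ltnS !ltn_divLR // !leq_divRL //.
by rewrite (mulnC m.+1) (mulnC m).
Qed.

Lemma count_iota_itv a b N : b <= N ->
  count [pred n | a < n <= b] (iota 1 N) = b - a.
Proof.
move=> bN; case: (leqP a b) => ab; last first.
  apply/eqP; rewrite (_ : b - a = 0); last lia.
  by rewrite -leqn0 leqNgt -has_count; apply/hasPn => n _ /=; lia.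
have -> : iota 1 N = iota 1 a ++ iota (1 + a) (b - a) ++ iota (1 + a + (b - a)) (N - b).
  by rewrite -!iotaD; congr iota; lia.
rewrite !count_cat.
rewrite (eq_in_count (a2 := pred0)); last by move=> n; rewrite mem_iota /=; lia.
rewrite (eq_in_count (s := iota (1 + a + _) _) (a2 := pred0));
  last by move=> n; rewrite mem_iota /=; lia.
rewrite (eq_in_count (s := iota (1 + a) (b - a)) (a2 := predT));
  last by move=> n; rewrite mem_iota /=; lia.
by rewrite !count_pred0 count_predT size_iota addn0.
Qed.

Lemma count_divn_eq N m : 0 < m ->
  count (fun n => N %/ n == m) (iota 1 N) = N %/ m - N %/ m.+1.
Proof.
move=> m0; rewrite -(@count_iota_itv (N %/ m.+1) _ _ (leq_div N m)).
by apply: eq_in_count => n; rewrite mem_iota => /andP[n0 _]; rewrite divn_eq_itv.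
Qed.

Lemma sumn_divn_diff N a b : 0 < a <= b ->
  \sum_(a <= m < b) (N %/ m - N %/ m.+1) = N %/ a - N %/ b.
Proof.
case/andP=> a0; elim: b => [|b IHb]; first by rewrite leqn0 => /eqP->; rewrite big_geq.
rewrite leq_eqVlt => /orP[/eqP<- | ab]; first by rewrite big_geq ?subnn.
have := leq_div2l N (leq_trans a0 ab) (leqnSn b); have := leq_div2l N a0 ab.
rewrite big_nat_recr ?IHb //=; lia.
Qed.

Local Open Scope ring_scope.

Lemma sumr_divn (V : nmodType) (g : nat -> V) N :
  \sum_(1 <= n < N.+1) g (N %/ n)%N =
  \sum_(1 <= m < N.+1) g m *+ (N %/ m - N %/ m.+1)%N.
Proof.
have divn_in n : n \in index_iota 1 N.+1 -> (N %/ n)%N \in index_iota 1 N.+1.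
  by rewrite !mem_index_iota !ltnS => /andP[n0 nN]; rewrite divn_gt0 // nN leq_div.
rewrite (eq_big_seq (fun n => \sum_(m <- index_iota 1 N.+1 | m == (N %/ n)%N) g m));
  last by move=> n /divn_in Nn; rewrite -big_filter filter_pred1_uniq ?iota_uniq // big_seq1.
rewrite (exchange_big_dep_nat predT) //; apply: eq_big_nat => m /andP[m0 _].
rewrite big_const_seq iter_addr_0 -count_divn_eq //; congr (_ *+ _).
by rewrite /index_iota subn1; apply: eq_count => n; rewrite eq_sym.
Qed.

Lemma ler_natr_divn (R : numFieldType) N k : (0 < k)%N ->
  (N %/ k)%:R <= N%:R / k%:R :> R.
Proof.
by move=> k0; rewrite ler_pdivlMr ?ltr0n // -natrM ler_nat leq_divM.
Qed.

Lemma ltr_natr_divnS (R : numFieldType) N k : (0 < k)%N ->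
  N%:R / k%:R < (N %/ k).+1%:R :> R.
Proof.
by move=> k0; rewrite ltr_pdivrMr ?ltr0n // -natrM ltr_nat ltn_ceil.
Qed.

Lemma divn_weight_approx (R : realFieldType) N m : (0 < m)%N ->
  `|(N %/ m - N %/ m.+1)%N%:R - N%:R / (m%:R * m.+1%:R)| <= 1 :> R.
Proof.
move=> m0; have m0' : m%:R != 0 :> R by rewrite pnatr_eq0 -lt0n.
have -> : N%:R / (m%:R * m.+1%:R) = N%:R / m%:R - N%:R / m.+1%:R :> R.
  rewrite -natr1; field.
  by rewrite m0' natr1 pnatr_eq0.
have := ler_natr_divn R N m m0; have := ltr_natr_divnS R N m m0.
have := ler_natr_divn R N m.+1 (ltn0Sn m); have := ltr_natr_divnS R N m.+1 (ltn0Sn m).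
rewrite natrB ?leq_div2l // -!natr1 ler_norml; lra.
Qed.

Lemma truncn_divn (R : archiRealFieldType) (x : R) n : 0 <= x -> (0 < n)%N ->
  Num.truncn (x / n%:R) = (Num.truncn x %/ n)%N.
Proof.
move=> x0 n0; have /andP[lex ltx] := truncn_itv x0; have n0' : 0 < n%:R :> R by rewrite ltr0n.
apply: truncn_def; apply/andP; split.
  by rewrite ler_pdivlMr // -natrM (le_trans _ lex) // ler_nat leq_divM.
by rewrite ltr_pdivrMr // -natrM (lt_le_trans ltx) // ler_nat ltn_ceil.
Qed.

Lemma ln_nat_ge0 (R : realType) m : 0 <= ln m%:R :> R.
Proof. by case: m => [|m]; [rewrite ln0 | rewrite ln_ge0 // ler1n]. Qed.

Lemma ler_ln_nat (R : realType) m k : (m <= k)%N -> ln m%:R <= ln k%:R :> R.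
Proof.
case: m => [|m] mk; first by rewrite ln0 // ln_nat_ge0.
by rewrite ler_ln ?posrE ?ltr0n ?ler_nat // (leq_trans _ mk).
Qed.

Lemma vonMangoldtE (R : realType) m p : primes m = [:: p] ->
  vonMangoldt m = ln p%:R :> R.
Proof. by rewrite /vonMangoldt => ->. Qed.

Lemma vonMangoldt_eq0 (R : realType) m : size (primes m) != 1%N ->
  vonMangoldt m = 0 :> R.
Proof. by rewrite /vonMangoldt; case: (primes m) => [|p []]. Qed.

Lemma vonMangoldt_ge0_le_ln (R : realType) m :
  0 <= (vonMangoldt m : R) <= ln m%:R.
Proof.
rewrite /vonMangoldt; case Em: (primes m) => [|p []]; rewrite ?lexx ?ln_nat_ge0 //.
have : p \in primes m by rewrite Em mem_head.
by rewrite mem_primes => /and3P[_ m0 pm]; rewrite ler_ln_nat // dvdn_leq.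
Qed.

Definition vonMangoldt2 (R : realType) m : R := vonMangoldt m * vonMangoldt m.+2.

Lemma vonMangoldt2_ge0_le (R : realType) m :
  0 <= vonMangoldt2 R m <= ln m.+2%:R ^+ 2.
Proof.
have /andP[a0 am] := vonMangoldt_ge0_le_ln R m.
have /andP[b0 bm] := vonMangoldt_ge0_le_ln R m.+2.
by rewrite mulr_ge0 //= expr2 ler_pM // (le_trans am) // ler_ln_nat // leqW.
Qed.

Lemma ln_lower_bound (R : realType) (p c : R) n :
  0 <= c < n%:R -> 1 <= p * (1 - c / n%:R) ^+ n -> c <= ln p.
Proof.
move=> /andP[c0 cn] hp; have n0 : 0 < n%:R :> R by apply: le_lt_trans cn.
have /andP[d0 d1] : 0 <= c / n%:R < 1.
  by rewrite divr_ge0 // ltr_pdivrMr // mul1r.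
have expRd : expR (c / n%:R) * (1 - c / n%:R) <= 1.
  apply: le_trans (ler_wpM2l (expR_ge0 _) (expR_ge1Dx (- (c / n%:R)))) _.
  by rewrite -expRD addrN expR0.
have q0 : 0 < (1 - c / n%:R) ^+ n by rewrite exprn_gt0 // subr_gt0.
have p0 : 0 < p by rewrite -(pmulr_lgt0 _ q0) (lt_le_trans ltr01).
rewrite -ler_expR lnK ?posrE // -[c](mulfVK (lt0r_neq0 n0)) expRM_natr.
apply: (le_trans (y := expR (c / n%:R) ^+ n * (p * (1 - c / n%:R) ^+ n))).
  by rewrite ler_peMr ?exprn_ge0 ?expR_ge0.
by rewrite mulrCA -exprMn ger_pMr // exprn_ile1 // mulr_ge0 ?expR_ge0 ?subr_ge0 ?ltW.
Qed.

Lemma ln2_ge (R : realType) : 672 / 1000 <= ln 2%:R :> R.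
Proof. by apply: (@ln_lower_bound _ _ _ 16); lra. Qed.

Lemma ln3_ge (R : realType) : 1056 / 1000 <= ln 3%:R :> R.
Proof. by apply: (@ln_lower_bound _ _ _ 16); lra. Qed.

Lemma ln_natS_sub_le (R : realType) k : (0 < k)%N ->
  ln k.+1%:R - ln k%:R <= k%:R^-1 :> R.
Proof.
move=> k0; have k0' : 0 < k%:R :> R by rewrite ltr0n.
have -> : k.+1%:R = k%:R * (1 + k%:R^-1) :> R.
  by rewrite mulrDr mulr1 mulfV ?lt0r_neq0 // natr1.
have kV0 : 0 < k%:R^-1 :> R by rewrite invr_gt0.
by rewrite lnM ?posrE ?addr_gt0 // addrC addKr le_ln1Dx // (lt_trans _ kV0) ?ltrN10.
Qed.

Definition r2_majorant (R : realType) m : R := 2 * ln m.+2%:R ^+ 2 / m%:R.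

Lemma r2_majorant_ge0 (R : realType) m : 0 <= r2_majorant R m.
Proof. by apply: divr_ge0 => //; apply: mulr_ge0 => //; apply: sqr_ge0. Qed.

Lemma r2_term_ge0 (R : realType) m : 0 <= r2_term m :> R.
Proof.
have /andP[f0 _] := vonMangoldt2_ge0_le R m.
by rewrite /r2_term divr_ge0 // mulr_ge0.
Qed.

Lemma r2_term_le_majorantB (R : realType) m : (254 <= m)%N ->
  r2_term m <= r2_majorant R m - r2_majorant R m.+1.
Proof.
move=> m254; rewrite /r2_majorant.
set a := ln m.+2%:R; set b := ln m.+3%:R.
have a5 : 5 <= a.
  have ln256 : ln 256%:R = ln 2%:R *+ 8 :> R by rewrite -lnXn ?ltr0n // -natrX.
  have := ln2_ge R; have : ln 256%:R <= a by apply: ler_ln_nat; lia.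
  rewrite ln256; lra.
have [M1 M2] : m.+1%:R = m%:R + 1 :> R /\ m.+2%:R = m%:R + 2 :> R.
  by split; rewrite -[LHS]natr1 // -natr1 -addrA.
have M254 : 254 <= m%:R :> R by rewrite ler_nat.
have /andP[ab ba] : 0 <= b - a <= (m%:R + 2)^-1.
  by rewrite subr_ge0 ler_ln_nat //= -M2 ln_natS_sub_le.
have e1 : (b - a) * (m%:R + 2) <= 1.
  by rewrite -(ler_pM2r (_ : 0 < (m%:R + 2)^-1)) ?invr_gt0 -?mulrA ?mulfV ?mul1r ?mulr1; lra.
have term : r2_term m <= a ^+ 2 / (m%:R * (m%:R + 1)).
  have /andP[f0 fa] := vonMangoldt2_ge0_le R m.
  by rewrite /r2_term -M1 ler_wpM2r // invr_ge0 mulr_ge0.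
apply: le_trans term _; rewrite M1 -subr_ge0.
have -> : 2 * a ^+ 2 / m%:R - 2 * b ^+ 2 / (m%:R + 1) - a ^+ 2 / (m%:R * (m%:R + 1)) =
    (2 * (m%:R + 1) * a ^+ 2 - 2 * m%:R * b ^+ 2 - a ^+ 2) / (m%:R * (m%:R + 1)).
  by field; lra.
rewrite divr_ge0 ?mulr_ge0 //.
have -> : b = a + (b - a) by rewrite addrC subrK.
set e := b - a in ab e1 *.
have Me : m%:R * e <= 1 by nra.
have h1 : 4 * m%:R * a * e <= 4 * a by nra.
have h2 : 2 * m%:R * e * e <= 2 by nra.
nra.
Qed.

Lemma r2_partialS (R : realType) n : r2_partial n.+1 = r2_partial n + r2_term n :> R.
Proof.
case: n => [|n]; last by rewrite /r2_partial big_nat_recr.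
by rewrite /r2_partial !big_geq // /r2_term vonMangoldt_eq0 // !mul0r addr0.
Qed.

Lemma r2_partial_nondecreasing (R : realType) : nondecreasing_seq (@r2_partial R).
Proof. by apply/nondecreasing_seqP => n; rewrite r2_partialS lerDl r2_term_ge0. Qed.

Lemma r2_partial_le_majorant (R : realType) K n : (254 <= K)%N ->
  r2_partial n <= r2_partial K + r2_majorant R K :> R.
Proof.
move=> K254; have [nK | Kn] := leqP n K.
  by rewrite (le_trans (r2_partial_nondecreasing R _ _ nK)) // lerDl r2_majorant_ge0.
have partial_le j :
    r2_partial (K + j) <= r2_partial K + r2_majorant R K - r2_majorant R (K + j) :> R.
  elim: j => [|j IHj]; first by rewrite addn0 addrK.
  have := @r2_term_le_majorantB R (K + j) (leq_trans K254 (leq_addr j K)).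
  rewrite addnS r2_partialS; lra.
by rewrite -(subnKC (ltnW Kn)) (le_trans (partial_le _)) // lerBlDr lerDl r2_majorant_ge0.
Qed.

Lemma r2_partial_cvg (R : realType) : cvgn (@r2_partial R).
Proof.
apply: nondecreasing_is_cvgn; first exact: r2_partial_nondecreasing.
by exists (r2_partial 254 + r2_majorant R 254) => _ [n _ <-]; apply: r2_partial_le_majorant.
Qed.

Lemma r2_partial_le_r2 (R : realType) n : r2_partial n <= r2 :> R.
Proof. exact: nondecreasing_cvgn_le (r2_partial_nondecreasing R) (r2_partial_cvg R) n. Qed.

Lemma r2_ge0 (R : realType) : 0 <= r2 :> R.
Proof. by apply: le_trans (r2_partial_le_r2 R 0); rewrite /r2_partial big_geq. Qed.

Lemma r2_le_partial_majorant (R : realType) K : (254 <= K)%N ->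
  r2 <= r2_partial K + r2_majorant R K :> R.
Proof.
move=> K254; apply: limr_le; first exact: r2_partial_cvg.
by apply: nearW => n; apply: r2_partial_le_majorant.
Qed.

Lemma r2_lower_bound (R : realType) : 368142813%:R / 10 ^+ 9 <= r2 :> R.
Proof.
apply: le_trans (r2_partial_le_r2 R 12).
have l2 := ln2_ge R; have l3 := ln3_ge R.
have l5 : 152 / 100 <= ln 5%:R :> R by apply: (@ln_lower_bound _ _ _ 16); lra.
have l7 : 1824 / 1000 <= ln 7%:R :> R by apply: (@ln_lower_bound _ _ _ 16); lra.
have l11 : 2224 / 1000 <= ln 11%:R :> R by apply: (@ln_lower_bound _ _ _ 16); lra.
have l13 : 2368 / 1000 <= ln 13%:R :> R by apply: (@ln_lower_bound _ _ _ 16); lra.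
rewrite /r2_partial /r2_term; do 11 rewrite big_ltn //; rewrite big_geq //.
rewrite !(@vonMangoldt_eq0 R 1, @vonMangoldt_eq0 R 6, @vonMangoldt_eq0 R 10,
          @vonMangoldt_eq0 R 12) //.
rewrite (@vonMangoldtE R 2 2) // (@vonMangoldtE R 3 3) // (@vonMangoldtE R 4 2) //.
rewrite (@vonMangoldtE R 5 5) // (@vonMangoldtE R 7 7) // (@vonMangoldtE R 8 2) //.
rewrite (@vonMangoldtE R 9 3) // (@vonMangoldtE R 11 11) // (@vonMangoldtE R 13 13) //.
rewrite !mul0r !mulr0 !mul0r !add0r !addr0.
have t1 := ler_pM (_ : 0 <= 672/1000) (_ : 0 <= 672/1000) l2 l2.
have t2 := ler_pM (_ : 0 <= 1056/1000) (_ : 0 <= 152/100) l3 l5.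
have t3 := ler_pM (_ : 0 <= 152/100) (_ : 0 <= 1824/1000) l5 l7.
have t4 := ler_pM (_ : 0 <= 1824/1000) (_ : 0 <= 1056/1000) l7 l3.
have t5 := ler_pM (_ : 0 <= 1056/1000) (_ : 0 <= 2224/1000) l3 l11.
have t6 := ler_pM (_ : 0 <= 2224/1000) (_ : 0 <= 2368/1000) l11 l13.
lra.
Qed.

Section DivnSumSplit.
Context {R : realFieldType} {g : nat -> R} {N Y : nat} {L : R}.
Hypothesis g_bound : forall m, (m <= N)%N -> 0 <= g m <= L.
Hypothesis YN : (Y <= N)%N.

Lemma divn_sum_head :
  `|\sum_(1 <= m < Y.+1) g m *+ (N %/ m - N %/ m.+1)%N
    - N%:R * \sum_(1 <= m < Y.+1) g m / (m%:R * m.+1%:R)| <= Y%:R * L.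
Proof.
have -> : Y%:R * L = \sum_(1 <= m < Y.+1) L by rewrite sumr_const_nat subn1 mulr_natl.
rewrite mulr_sumr -sumrB.
apply: le_trans (ler_norm_sum _ _ _) (ler_sum_nat _) => m /andP[m0 mY].
have /andP[g0 gL] := g_bound _ (leq_trans (ltnSE mY) YN).
rewrite -[g m *+ _]mulr_natr mulrCA -mulrBr normrM ger0_norm //.
by rewrite -[L]mulr1 ler_pM ?normr_ge0 ?divn_weight_approx.
Qed.

Lemma divn_sum_tail :
  0 <= \sum_(Y.+1 <= m < N.+1) g m *+ (N %/ m - N %/ m.+1)%N <= L * (N %/ Y.+1)%:R.
Proof.
have g0 m : (Y.+1 <= m < N.+1)%N -> 0 <= g m.
  by move=> /andP[_ mN]; have /andP[] := g_bound _ (ltnSE mN).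
rewrite big_nat_cond sumr_ge0 /=; last by move=> m /andP[/(g0 m) ? _]; rewrite mulrn_wge0.
rewrite -big_nat_cond.
apply: (le_trans (y := \sum_(Y.+1 <= m < N.+1) L *+ (N %/ m - N %/ m.+1)%N)).
  apply: ler_sum_nat => m /andP[_ mN]; have /andP[_ gL] := g_bound _ (ltnSE mN).
  exact: ler_wMn2r gL.
have L0 : 0 <= L by have /andP[g00 gL] := g_bound _ (leq0n N); apply: le_trans gL.
rewrite sumrMnr -[L *+ _]mulr_natr ler_wpM2l // ler_nat.
by rewrite sumn_divn_diff ?leq_subr //= ltnS.
Qed.

End DivnSumSplit.

Lemma sum_vonMangoldt2_divn_approx (R : realType) N Y (L : R) :
  (254 <= Y)%N -> (Y < N)%N -> (forall m, (m <= N)%N -> ln m.+2%:R ^+ 2 <= L) ->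
  `|\sum_(1 <= m < N.+1) vonMangoldt2 R m *+ (N %/ m - N %/ m.+1)%N - r2 * N%:R|
    <= L * (Y%:R + 3 * (N%:R / Y.+1%:R)).
Proof.
move=> Y254 YN lnL.
have g_bound m : (m <= N)%N -> 0 <= vonMangoldt2 R m <= L.
  move=> mN; have /andP[f0 fm] := vonMangoldt2_ge0_le R m.
  by rewrite f0 (le_trans fm) ?lnL.
have L0 : 0 <= L by have /andP[g0 gL] := g_bound _ (leq0n N); apply: le_trans gL.
rewrite (big_cat_nat _ (n := Y.+1)) //=; last exact: ltnW.
have head := divn_sum_head g_bound (ltnW YN).
have /andP[B0 BL] := divn_sum_tail g_bound (ltnW YN).
set A := \sum_(1 <= m < Y.+1) _ in head *; set B := \sum_(Y.+1 <= m < N.+1) _ in B0 BL *.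
set q := N%:R / Y.+1%:R.
have Lq0 : 0 <= L * q by rewrite mulr_ge0 ?divr_ge0.
have BLq : B <= L * q := le_trans BL (ler_wpM2l L0 (ler_natr_divn R N Y.+1 (ltn0Sn Y))).
set P := r2_partial Y.+1 : R.
have P_r2 : P <= r2 := r2_partial_le_r2 R Y.+1.
have r2_P : r2 <= P + r2_majorant R Y.+1 := r2_le_partial_majorant R Y.+1 (leqW Y254).
have majL : N%:R * r2_majorant R Y.+1 <= 2 * (L * q).
  rewrite /r2_majorant mulrCA -!mulrA ler_wpM2l // mulrA ler_wpM2r ?divr_ge0 //.
  by rewrite -expr2 lnL.
have /andP[NP0 NP2] : 0 <= N%:R * (r2 - P) <= 2 * (L * q).
  by rewrite mulr_ge0 ?subr_ge0 //= (le_trans _ majL) // ler_wpM2l // lerBlDl.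
rewrite (_ : \sum_(1 <= m < Y.+1) _ / _ = P) // in head.
have -> : A + B - r2 * N%:R = (A - N%:R * P) + B - N%:R * (r2 - P) by ring.
have -> : L * (Y%:R + 3 * q) = Y%:R * L + 3 * (L * q) by ring.
move: (A - N%:R * P) (N%:R * (r2 - P)) (L * q) head NP0 NP2 BLq Lq0 => a c Lq.
rewrite !ler_norml => /andP[? ?] *; apply/andP; split; lra.
Qed.

Lemma Ssum_sub_r2_le (R : realType) (x : R) : 256 * 256 <= x ->
  `|Ssum x - r2 * x| <= (16 + r2) * (Num.sqrt x * ln x ^+ 2).
Proof.
move=> x_ge; have x0 : 0 <= x by lra.
have /andP[Nx xN] := truncn_itv x0; set N := Num.truncn x in Nx xN *.
set s := Num.sqrt x; have s0 : 0 <= s := sqrtr_ge0 x.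
have ss : s * s = x by rewrite -expr2 sqr_sqrtr.
have /andP[Ys sY] := truncn_itv s0; set Y := Num.truncn s in Ys sY *.
have s256 : 256 <= s by nra.
have lnx1 : 1 <= ln x.
  have : ln 3%:R <= ln x by rewrite ler_ln ?posrE; lra.
  have := ln3_ge R; lra.
have lnL m : (m <= N)%N -> ln m.+2%:R ^+ 2 <= 4 * ln x ^+ 2.
  move=> mN; have mx : m%:R <= x by apply: le_trans Nx; rewrite ler_nat.
  have m2 : m.+2%:R <= x * x by rewrite -addn2 natrD; nra.
  have : ln m.+2%:R <= ln x + ln x by rewrite -lnM ?posrE ?ler_ln ?posrE ?mulr_gt0 ?ltr0n //; lra.
  have := ln_nat_ge0 R m.+2; nra.
have Y254 : (254 <= Y)%N by rewrite truncn_ge_nat //; lra.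
have YN : (Y < N)%N.
  rewrite -ltnS -(ltr_nat R) (le_lt_trans _ xN) //.
  by rewrite -natr1; nra.
have SE : Ssum x = \sum_(1 <= m < N.+1) vonMangoldt2 R m *+ (N %/ m - N %/ m.+1)%N.
  rewrite -sumr_divn; apply: eq_big_nat => n /andP[n0 _].
  by rewrite /vonMangoldt2 truncn_divn.
have q_s : N%:R / Y.+1%:R <= s.
  by rewrite ler_pdivrMr ?ltr0n // (le_trans Nx) // -ss ler_wpM2l // ltW.
set q := N%:R / Y.+1%:R in q_s *.
have l1 : 1 <= ln x ^+ 2 by rewrite expr2; nra.
have err : 4 * ln x ^+ 2 * (Y%:R + 3 * q) <= 16 * (s * ln x ^+ 2).
  have Yq : Y%:R + 3 * q <= 4 * s by lra.
  have := ler_wpM2l (_ : 0 <= 4 * ln x ^+ 2) Yq; lra.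
have r20 := r2_ge0 R.
have r2_frac : 0 <= r2 * (x - N%:R) <= r2 by rewrite mulr_ge0 ?ler_piMr //=; lra.
have r2_sl : r2 <= r2 * (s * ln x ^+ 2) by rewrite ler_peMr //; nra.
have := @sum_vonMangoldt2_divn_approx R N Y _ Y254 YN lnL.
rewrite -SE -/q !ler_norml => /andP[approx_lo approx_hi].
apply/andP; split; lra.
Qed.

Theorem theorem10p2 (R : realType) :
  cvgn (@r2_partial R) /\
  (forall eps : R, 0 < eps ->
     exists C : R, exists x0 : R, forall x : R, x0 <= x ->
       `| Ssum x - r2 * x | <= C * (x `^ ((2 + eps) / 3) * (ln x) ^+ 2)) /\
  (368142813%:R / (10 ^+ 9) <= (r2 : R)).
Proof.
split; first exact: r2_partial_cvg.
split; last exact: r2_lower_bound.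
move=> eps eps0; exists (16 + r2), (256 * 256) => x x_ge.
apply: le_trans (Ssum_sub_r2_le R x x_ge) _.
have r20 := r2_ge0 R.
rewrite ler_wpM2l ?ler_wpM2r ?sqr_ge0 //; first lra.
have x0 : 0 <= x by lra.
by rewrite -(powR12_sqrt x0) ler_powR //; lra.
Qed.
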